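(* Consider two pairs of lines in the plane. (1) If one pair consists of parallel lines, then the rectangle locus for the pairs is a line, a line missing an open segment, a point, or the empty set. (2) The rectangle locus is the entire plane if and only if each pair consists of orthogonal lines and all four lines meet at the same point. (3) Suppose neither pair consists of parallel lines. If the crossing points of the two pairs are different and either both pairs consist of orthogonal lines or one pair is a translation of the other, then the rectangle locus is a line.
   Context: A pair of lines means two distinct lines; two pairs of lines are distinct pairs, possibly sharing one line. The rectangle locus of two pairs $L_1,L_3$ and $L_2,L_4$ is the set of points $p$ in the plane that are the center of a (possibly degenerate) rectangle one of whose diagonals joins $L_1$ and $L_3$ and the other joins $L_2$ and $L_4$; equivalently, $p$ is the midpoint both of a segment joining $L_1$ and $L_3$ and of a segment joining $L_2$ and $L_4$, these two segments having equal length. A pair is a translation of the other if it is its image under a translation of the plane. *)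

From HB Require Import structures.
From mathcomp Require Import all_boot all_order all_algebra.
From mathcomp Require Import reals.
Set Implicit Arguments. Unset Strict Implicit. Unset Printing Implicit Defensive.
Import Order.TTheory GRing.Theory Num.Theory.
Local Open Scope ring_scope.

Section Plane.
Variable R : realType.
Definition pt := (R * R)%type.
Definition pset := pt -> Prop.

Definition line (p d : pt) : pset :=
  fun q => exists t : R, q = (p.1 + t * d.1, p.2 + t * d.2).

Definition is_line (L : pset) : Prop :=
  exists p d : pt, d != (0, 0) /\ L = line p d.

Definition par_lines (L L' : pset) : Prop :=
  exists p p' d : pt, d != (0, 0) /\ L = line p d /\ L' = line p' d.

Definition orth_lines (L L' : pset) : Prop :=
  exists p d p' d' : pt, d != (0, 0) /\ d' != (0, 0) /\
    L = line p d /\ L' = line p' d' /\ d.1 * d'.1 + d.2 * d'.2 = 0.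

Definition midpoint (a c : pt) : pt := ((a.1 + c.1) / 2, (a.2 + c.2) / 2).

Definition dist (a c : pt) : R :=
  Num.sqrt ((a.1 - c.1) ^+ 2 + (a.2 - c.2) ^+ 2).

Definition rect_locus (L1 L3 L2 L4 : pset) : pset :=
  fun p => exists a c b d : pt,
    L1 a /\ L3 c /\ L2 b /\ L4 d /\
    p = midpoint a c /\ p = midpoint b d /\ dist a c = dist b d.

Definition translate (v : pt) (L : pset) : pset :=
  fun q => L (q.1 - v.1, q.2 - v.2).

Definition pair_translation (L1 L3 L2 L4 : pset) : Prop :=
  exists v : pt,
    (L2 = translate v L1 /\ L4 = translate v L3) \/
    (L2 = translate v L3 /\ L4 = translate v L1).

Definition open_segment (u v : pt) : pset :=
  fun q => exists t : R, 0 < t < 1 /\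
    q = ((1 - t) * u.1 + t * v.1, (1 - t) * u.2 + t * v.2).

Definition empty_pset : pset := fun _ => False.
Definition full_pset : pset := fun _ => True.
End Plane.

From HB Require Import structures.
From mathcomp Require Import all_boot all_order all_algebra.
From mathcomp Require Import boolp reals ring lra.
Import Order.TTheory GRing.Theory Num.Theory.
Local Open Scope ring_scope.
Set Implicit Arguments. Unset Strict Implicit.

(* Through two crossing lines [line o d] and [line o e] every point p is the
   midpoint of exactly one segment joining them: writing p - o = l d + r e, it
   joins o + 2 l d to o + 2 r e, and its squared length 4 |l d - r e|^2 =
   4 |p - o|^2 - 16 l r (d . e) is a positive definite quadratic form in p - o.
   Between two parallel lines the midpoints fill the middle line, and every
   squared length from the squared distance of the lines on occurs.  Hence if
   one pair is parallel, the locus is either the meet of two lines or the part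
   of a line where a convex quadratic is at least a constant.  If both pairs
   cross, the locus is the zero set of the difference of two quadratic forms.
   It is the whole plane only if the forms coincide, which forces a common
   centre and then, unless the pairs coincide, orthogonal pairs; if both pairs
   are orthogonal or translates of each other, the quadratic parts cancel and
   the difference is a nonconstant affine function, vanishing on a line. *)

Section PlaneVectors.
Context {R : realFieldType}.
Implicit Types (u v w d e : R * R) (s t : R).

Definition vadd u v : R * R := (u.1 + v.1, u.2 + v.2).
Definition vsub u v : R * R := (u.1 - v.1, u.2 - v.2).
Definition vscale t u : R * R := (t * u.1, t * u.2).
Definition dot u v : R := u.1 * v.1 + u.2 * v.2.
Definition cross u v : R := u.1 * v.2 - u.2 * v.1.
Definition norm2 u : R := u.1 ^+ 2 + u.2 ^+ 2.

Lemma norm2_dot u : norm2 u = dot u u.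
Proof. by rewrite /norm2 /dot !expr2. Qed.

Lemma norm2_ge0 u : 0 <= norm2 u.
Proof. exact: addr_ge0 (sqr_ge0 _) (sqr_ge0 _). Qed.

Lemma norm2_eq0 u : (norm2 u == 0) = (u == (0, 0)).
Proof. by case: u => x y; rewrite /norm2 paddr_eq0 ?sqr_ge0 // !sqrf_eq0 xpair_eqE. Qed.

Lemma norm2_gt0 u : u != (0, 0) -> 0 < norm2 u.
Proof. by rewrite lt_def norm2_eq0 norm2_ge0 andbT. Qed.

Lemma norm2_add_scale u v t :
  norm2 (vadd u (vscale t v)) = norm2 v * t ^+ 2 + 2 * dot u v * t + norm2 u.
Proof. rewrite /norm2 /dot /vadd /vscale /=; ring. Qed.

Lemma vscale_eq0 t u : (vscale t u == (0, 0)) = (t == 0) || (u == (0, 0)).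
Proof.
case: u => x y; rewrite !xpair_eqE /= !mulf_eq0.
by case: (t == 0); rewrite ?orbF.
Qed.

Lemma line_param_inj m d s t : d != (0, 0) ->
  vadd m (vscale s d) = vadd m (vscale t d) -> s = t.
Proof.
move=> d0 [h1 h2]; apply/eqP; rewrite -subr_eq0.
have : vscale (s - t) d == (0, 0).
  by rewrite /vscale !mulrBl xpair_eqE; apply/andP; split; apply/eqP; lra.
by rewrite vscale_eq0 (negPf d0) orbF.
Qed.

Lemma cross_self u : cross u u = 0.
Proof. by rewrite /cross mulrC subrr. Qed.

Lemma cross_antisym u v : cross u v = - cross v u.
Proof. rewrite /cross; ring. Qed.

Lemma cross_eq0_sym u v : cross u v = 0 -> cross v u = 0.
Proof. by rewrite cross_antisym => /eqP; rewrite oppr_eq0 => /eqP. Qed.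

Lemma crossBl u v w : cross (vsub u v) w = cross u w - cross v w.
Proof. rewrite /cross /vsub /=; ring. Qed.

Lemma lagrange_identity u v : norm2 u * norm2 v = cross u v ^+ 2 + dot u v ^+ 2.
Proof. rewrite /norm2 /cross /dot; ring. Qed.

Lemma cross_neq0_orth d e : d != (0, 0) -> e != (0, 0) -> dot d e = 0 -> cross d e != 0.
Proof.
move=> d0 e0 de; apply/eqP => c; have := mulr_gt0 (norm2_gt0 d0) (norm2_gt0 e0).
by rewrite lagrange_identity c de expr0n addr0 ltxx.
Qed.

Lemma cross_neq0_l d e : cross d e != 0 -> d != (0, 0).
Proof. by apply: contraNneq => ->; rewrite /cross /= !mul0r subrr. Qed.

Lemma cross_neq0_r d e : cross d e != 0 -> e != (0, 0).
Proof. by apply: contraNneq => ->; rewrite /cross /= !mulr0 subrr. Qed.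

Lemma vscale_cross u v w :
  vscale (cross u v) w = vadd (vscale (cross w v) u) (vscale (cross u w) v).
Proof. rewrite /vscale /vadd /cross /=; congr pair; ring. Qed.

Lemma cross_eq0_trans u v w :
  w != (0, 0) -> cross u w = 0 -> cross w v = 0 -> cross u v = 0.
Proof.
move=> w0 uw wv; apply/eqP.
have : vscale (cross u v) w == (0, 0).
  by rewrite vscale_cross uw wv /vscale /vadd /= !mul0r addr0 eqxx.
by rewrite vscale_eq0 (negPf w0) orbF.
Qed.

Lemma cross_eq0_par u d d' : d != (0, 0) -> d' != (0, 0) -> cross d d' = 0 ->
  (cross u d = 0 <-> cross u d' = 0).
Proof.
move=> d0 d'0 dd'; have d'd := cross_eq0_sym dd'.
by split=> ?; [apply: (cross_eq0_trans d0) | apply: (cross_eq0_trans d'0)].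
Qed.

(* Cramer coordinates: [w = coordl d e w * d + coordr d e w * e]. *)
Definition coordl d e w : R := cross w e / cross d e.
Definition coordr d e w : R := cross d w / cross d e.

Lemma coordsP d e w : cross d e != 0 ->
  w = vadd (vscale (coordl d e w) d) (vscale (coordr d e w) e).
Proof.
rewrite /coordl /coordr /cross => de.
by case: w => x y; rewrite /vadd /vscale /=; congr pair; field.
Qed.

Lemma coordl_comb d e s t : cross d e != 0 ->
  coordl d e (vadd (vscale s d) (vscale t e)) = s.
Proof. by rewrite /coordl /cross /vadd /vscale /= => de; field. Qed.

Lemma coordr_comb d e s t : cross d e != 0 ->
  coordr d e (vadd (vscale s d) (vscale t e)) = t.
Proof. by rewrite /coordr /cross /vadd /vscale /= => de; field. Qed.

Lemma comb_eq0 d e s t : cross d e != 0 ->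
  vadd (vscale s d) (vscale t e) = (0, 0) -> s = 0 /\ t = 0.
Proof.
move=> de st0; split.
  by rewrite -(coordl_comb s t de) st0 /coordl /cross /= !mul0r subrr mul0r.
by rewrite -(coordr_comb s t de) st0 /coordr /cross /= !mulr0 subrr mul0r.
Qed.

Lemma coordl_eq0 d e w : cross d e != 0 -> (coordl d e w == 0) = (cross w e == 0).
Proof. by move=> de; rewrite /coordl mulf_eq0 invr_eq0 (negPf de) orbF. Qed.

Lemma coordr_eq0 d e w : cross d e != 0 -> (coordr d e w == 0) = (cross d w == 0).
Proof. by move=> de; rewrite /coordr mulf_eq0 invr_eq0 (negPf de) orbF. Qed.

Definition skew_refl d e w : R * R :=
  vsub (vscale (coordl d e w) d) (vscale (coordr d e w) e).

Lemma skew_reflD d e u v :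
  skew_refl d e (vadd u v) = vadd (skew_refl d e u) (skew_refl d e v).
Proof. rewrite /skew_refl /coordl /coordr /cross /vsub /vadd /vscale /=; congr pair; ring. Qed.

Lemma skew_reflZ d e t u :
  skew_refl d e (vscale t u) = vscale t (skew_refl d e u).
Proof. rewrite /skew_refl /coordl /coordr /cross /vsub /vadd /vscale /=; congr pair; ring. Qed.

Lemma skew_refl_eq0 d e w : cross d e != 0 ->
  skew_refl d e w = (0, 0) -> w = (0, 0).
Proof.
move=> de sw0; have [l0 r0] : coordl d e w = 0 /\ - coordr d e w = 0.
  apply: (comb_eq0 de); rewrite -sw0 /skew_refl /vsub /vadd /vscale /=.
  by congr pair; ring.
move/eqP: r0; rewrite oppr_eq0 => /eqP r0.
by rewrite (coordsP w de) l0 r0 /vadd /vscale /= !mul0r addr0.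
Qed.

Lemma dot_skew_reflE d e w c : dot (skew_refl d e w) c =
  w.1 * dot (skew_refl d e (1, 0)) c + w.2 * dot (skew_refl d e (0, 1)) c.
Proof. by rewrite /dot /skew_refl /coordl /coordr /cross /vsub /vscale /=; ring. Qed.

Definition mixed_term d e w : R := coordl d e w * coordr d e w * dot d e.

Lemma norm2_skew_refl d e w : cross d e != 0 ->
  norm2 (skew_refl d e w) = norm2 w - 4 * mixed_term d e w.
Proof.
rewrite /mixed_term /norm2 /skew_refl /coordl /coordr /dot /cross /vsub /vscale /=.
by move=> de; field.
Qed.

Lemma mixed_term_eq0 d e w : cross d e != 0 -> dot d e != 0 ->
  mixed_term d e w = 0 -> cross w e = 0 \/ cross d w = 0.
Proof.
move=> de de0 /eqP; rewrite /mixed_term mulf_eq0 (negPf de0) orbF mulf_eq0.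
by rewrite coordl_eq0 ?coordr_eq0 // => /orP[] /eqP; [left | right].
Qed.

Lemma mixed_term_uniq d1 e1 d2 e2 : cross d1 e1 != 0 -> cross d2 e2 != 0 ->
  (forall w, mixed_term d1 e1 w = mixed_term d2 e2 w) ->
  [\/ dot d1 e1 = 0, cross d1 d2 = 0 /\ cross e1 e2 = 0
     | cross d1 e2 = 0 /\ cross e1 d2 = 0].
Proof.
move=> de1 de2 same; have [|dot1] := eqVneq (dot d1 e1) 0; first by constructor 1.
have dot2 : dot d2 e2 != 0.
  have m1 : mixed_term d1 e1 (vadd d1 e1) = dot d1 e1.
    by move: de1; rewrite /mixed_term /coordl /coordr /cross /vadd /dot /= => de1; field.
  by apply: contra_neq dot1 => dot2; rewrite -m1 same /mixed_term dot2 mulr0.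
(* [mixed_term d2 e2] vanishes only along d2 and e2, but [mixed_term d1 e1]
   vanishes along d1 and e1. *)
have zero_on_dirs w : coordl d1 e1 w = 0 \/ coordr d1 e1 w = 0 ->
    cross w e2 = 0 \/ cross d2 w = 0.
  move=> lr0; apply: (mixed_term_eq0 de2 dot2); rewrite -same /mixed_term.
  by case: lr0 => ->; rewrite ?mulr0 ?mul0r.
have [d1e2|d2d1] : cross d1 e2 = 0 \/ cross d2 d1 = 0.
  by apply: zero_on_dirs; right; rewrite /coordr cross_self mul0r.
all: have [e1e2|d2e1] : cross e1 e2 = 0 \/ cross d2 e1 = 0
  by apply: zero_on_dirs; left; rewrite /coordl cross_self mul0r.
- case/eqP: de1.
  exact: cross_eq0_trans (cross_neq0_r de2) d1e2 (cross_eq0_sym e1e2).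
- by constructor 3; split => //; apply: cross_eq0_sym.
- by constructor 2; split => //; apply: cross_eq0_sym.
- case/eqP: de1.
  exact: cross_eq0_trans (cross_neq0_l de2) (cross_eq0_sym d2d1) d2e1.
Qed.

(* The squared length of the segment from [line o d] to [line o e] with
   midpoint [p], see [midchord_crossingP]. *)
Definition chord_len2 o d e p : R := 4 * norm2 (skew_refl d e (vsub p o)).

Lemma chord_len2E o d e p : cross d e != 0 ->
  chord_len2 o d e p = 4 * norm2 (vsub p o) - 16 * mixed_term d e (vsub p o).
Proof. by move=> de; rewrite /chord_len2 norm2_skew_refl //; ring. Qed.

Lemma chord_len2_base o d e : chord_len2 o d e o = 0.
Proof. by rewrite /chord_len2 /skew_refl /coordl /coordr /cross /vsub /norm2 /=; ring. Qed.

Lemma chord_len2_eq0 o d e p : cross d e != 0 -> chord_len2 o d e p = 0 -> p = o.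
Proof.
move=> de /eqP; rewrite mulf_eq0 pnatr_eq0 /= norm2_eq0 => /eqP /(skew_refl_eq0 de).
by case: p o => [p1 p2] [o1 o2] [/eqP + /eqP]; rewrite !subr_eq0 => /eqP -> /eqP ->.
Qed.

Lemma chord_len2_orth o d e p : cross d e != 0 -> dot d e = 0 ->
  chord_len2 o d e p = 4 * norm2 (vsub p o).
Proof. by move=> de de0; rewrite chord_len2E // /mixed_term de0 !mulr0 subr0. Qed.

Lemma chord_len2_along o d e m u t :
  chord_len2 o d e (vadd m (vscale t u)) =
  4 * norm2 (skew_refl d e u) * t ^+ 2
  + 8 * dot (skew_refl d e (vsub m o)) (skew_refl d e u) * t + chord_len2 o d e m.
Proof.
rewrite /chord_len2; have -> : vsub (vadd m (vscale t u)) o = vadd (vsub m o) (vscale t u).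
  by rewrite /vsub /vadd /vscale /=; congr pair; ring.
by rewrite skew_reflD skew_reflZ norm2_add_scale; ring.
Qed.

Lemma chord_len2_shift o v d e p :
  chord_len2 (vadd o v) d e p = chord_len2 o d e p
  - 8 * dot (skew_refl d e (vsub p o)) (skew_refl d e v) + 4 * norm2 (skew_refl d e v).
Proof.
rewrite /chord_len2; have -> : vsub p (vadd o v) = vadd (vsub p o) (vscale (-1) v).
  by rewrite /vsub /vadd /vscale /=; congr pair; ring.
by rewrite skew_reflD skew_reflZ norm2_add_scale; ring.
Qed.

End PlaneVectors.

Section Quadratic.
Context {R : rcfType}.

Lemma quadratic_ge_cases (A B C K : R) : 0 < A ->
  (forall t, K <= A * t ^+ 2 + B * t + C) \/
  exists t1 t2, t1 < t2 /\
    forall t, K <= A * t ^+ 2 + B * t + C <-> ~ (t1 < t < t2).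
Proof.
move=> A0; have A0' : A != 0 by rewrite gt_eqF.
set D := B ^+ 2 - 4 * A * (C - K).
have [D0|D0] := lerP D 0.
  left => t; rewrite -subr_ge0 -(pmulr_rge0 _ (_ : 0 < 4 * A)) ?mulr_gt0 //.
  have -> : 4 * A * (A * t ^+ 2 + B * t + C - K) = (2 * A * t + B) ^+ 2 - D.
    by rewrite /D; ring.
  by rewrite subr_ge0 (le_trans D0) ?sqr_ge0.
right; set S := Num.sqrt D.
have S0 : 0 < S by rewrite sqrtr_gt0.
have SD : S ^+ 2 = D by rewrite sqr_sqrtr // ltW.
set t1 := (- B - S) / (2 * A); set t2 := (- B + S) / (2 * A).
have t12 : t1 < t2 by rewrite ltr_pM2r ?invr_gt0 ?mulr_gt0 //; lra.
exists t1, t2; split => // t.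
have factor : A * t ^+ 2 + B * t + C - K = A * ((t - t1) * (t - t2)).
  have CK : C - K = (B ^+ 2 - S ^+ 2) / (4 * A) by rewrite SD /D; field.
  by rewrite -addrA CK /t1 /t2; field.
rewrite -subr_ge0 factor pmulr_rge0 //; split=> [le0 /andP[tt1 tt2]|between].
  by move: le0; rewrite pmulr_rge0 ?subr_gt0 // subr_ge0 leNgt tt2.
have [tt1|tt1] := lerP t t1; first by rewrite mulr_le0 // subr_le0 // (le_trans tt1) ?ltW.
have tt2 : t2 <= t by rewrite leNgt; apply/negP => tt2; apply: between; rewrite tt1.
by rewrite mulr_ge0 // subr_ge0 // (le_trans (ltW t12)).
Qed.

End Quadratic.

Section Lines.
Context {R : realType}.
Implicit Types (p q o x d e : pt R).

Lemma pset_ext (S T : pset R) : (forall p, S p <-> T p) -> S = T.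
Proof. by move=> ST; apply: funext => p; apply: propext. Qed.

Lemma line_base p d : line p d p.
Proof. by exists 0; case: p => a b; rewrite /= !mul0r !addr0. Qed.

Lemma lineP p d q : d != (0, 0) -> line p d q <-> cross (vsub q p) d = 0.
Proof.
move=> d0; split=> [[t ->]|qpd]; first by rewrite /cross /vsub /=; ring.
have := norm2_gt0 d0; rewrite lt0r => /andP[n0 _].
exists (dot (vsub q p) d / norm2 d); move: n0 qpd.
case: q p d {d0} => [q1 q2] [p1 p2] [x y].
rewrite /cross /vsub /dot /norm2 /= => n0 qpd; congr pair; apply/eqP.
  rewrite -subr_eq0 [X in X == 0]
    (_ : _ = y * ((q1 - p1) * y - (q2 - p2) * x) / (x ^+ 2 + y ^+ 2)).
    by rewrite qpd mulr0 mul0r.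
  by field.
rewrite -subr_eq0 [X in X == 0]
  (_ : _ = - x * ((q1 - p1) * y - (q2 - p2) * x) / (x ^+ 2 + y ^+ 2)).
  by rewrite qpd mulr0 mul0r.
by field.
Qed.

Lemma line_eq p d p' d' : d != (0, 0) -> d' != (0, 0) -> cross d d' = 0 ->
  line p d p' -> line p d = line p' d'.
Proof.
move=> d0 d'0 dd' /(lineP _ _ d0) p'p; apply: pset_ext => q.
rewrite !lineP // -(cross_eq0_par _ d0 d'0 dd').
have -> : vsub q p' = vsub (vsub q p) (vsub p' p) by rewrite /vsub /=; congr pair; ring.
by rewrite (crossBl (vsub q p)) p'p subr0.
Qed.

Lemma line_redir p d d' : d != (0, 0) -> d' != (0, 0) -> cross d d' = 0 ->
  line p d = line p d'.
Proof. by move=> d0 d'0 dd'; apply: line_eq => //; apply: line_base. Qed.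

Lemma line_dir p d q e : d != (0, 0) -> e != (0, 0) ->
  line p d = line q e -> cross d e = 0.
Proof.
move=> d0 e0 pdqe.
have /(lineP _ _ e0) h0 : line q e p by rewrite -pdqe; apply: line_base.
have /(lineP _ _ e0) h1 : line q e (vadd p d) by rewrite -pdqe; exists 1; rewrite !mul1r.
have -> : d = vsub (vsub (vadd p d) q) (vsub p q).
  by case: d {d0 pdqe h1} => *; rewrite /vsub /vadd /=; congr pair; ring.
by rewrite crossBl h0 h1 subrr.
Qed.

Lemma par_linesP p d p' d' : d != (0, 0) -> d' != (0, 0) ->
  par_lines (line p d) (line p' d') <-> cross d d' = 0.
Proof.
move=> d0 d'0; split=> [[q [q' [e [e0 [pdqe p'd'q'e]]]]]|dd'].
  have de := line_dir d0 e0 pdqe; have d'e := line_dir d'0 e0 p'd'q'e.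
  by apply/(cross_eq0_par _ e0 d'0 (cross_eq0_sym d'e)).
by exists p, p', d; do !split => //; apply: line_redir (cross_eq0_sym dd').
Qed.

Lemma crossing_lines_meet p d q e : cross d e != 0 ->
  exists o, line p d = line o d /\ line q e = line o e.
Proof.
move=> de; have d0 := cross_neq0_l de; have e0 := cross_neq0_r de.
set s := cross (vsub q p) e / cross d e.
exists (vadd p (vscale s d)); split.
  by apply: line_eq; rewrite ?cross_self //; exists s.
apply: line_eq; rewrite ?cross_self //; apply/(lineP _ _ e0).
by move: de; rewrite /s /cross /vsub /vadd /vscale /= => de; field.
Qed.

Lemma crossing_point_uniq o d e x : cross d e != 0 ->
  line o d x -> line o e x -> x = o.
Proof.
move=> de [s xs] [t xt].
have [s0 _] : s = 0 /\ - t = 0.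
  apply: (comb_eq0 de); move: xt; rewrite xs /vadd /vscale /= => -[h1 h2].
  by congr pair; lra.
by rewrite xs s0; case: (o) => *; rewrite /= !mul0r !addr0.
Qed.

Lemma translate_line v p d : translate v (line p d) = line (vadd p v) d.
Proof.
apply: pset_ext => q; split=> [[t [h1 h2]]|[t ->]]; exists t.
  by case: q h1 h2 => a b /= h1 h2; congr pair; lra.
by rewrite /=; congr pair; ring.
Qed.

Lemma is_line_affine_eq (k1 k2 k0 : R) : (k1, k2) != (0, 0) ->
  is_line (fun p : pt R => k1 * p.1 + k2 * p.2 = k0).
Proof.
move=> k0n; have : 0 < norm2 (k1, k2) by apply: norm2_gt0.
rewrite lt0r => /andP[n0 _].
have d0 : (- k2, k1) != (0, 0) by move: k0n; rewrite !xpair_eqE oppr_eq0 andbC.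
exists (vscale (k0 / norm2 (k1, k2)) (k1, k2)), (- k2, k1); split => //.
apply: pset_ext => q; rewrite lineP //.
have -> : cross (vsub q (vscale (k0 / norm2 (k1, k2)) (k1, k2))) (- k2, k1)
          = k1 * q.1 + k2 * q.2 - k0.
  by move: n0; rewrite /cross /vsub /vscale /norm2 /= => n0; field.
by split=> h; lra.
Qed.

Definition is_point (S : pset R) : Prop := exists x, S = (fun q => q = x).

Definition is_cut_line (S : pset R) : Prop :=
  exists L u v, is_line L /\ u <> v /\ L u /\ L v /\
    S = (fun q => L q /\ ~ open_segment u v q).

Lemma lines_meet_shape p d q e : d != (0, 0) -> e != (0, 0) ->
  is_line (fun x => line p d x /\ line q e x)
  \/ is_point (fun x => line p d x /\ line q e x)
  \/ (fun x => line p d x /\ line q e x) = @empty_pset R.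
Proof.
move=> d0 e0; have [de|de] := eqVneq (cross d e) 0; last first.
  have [o [-> ->]] := crossing_lines_meet p q de.
  right; left; exists o; apply: pset_ext => x.
  by split=> [[]|->]; [apply: crossing_point_uniq | split; apply: line_base].
have ed := cross_eq0_sym de.
have [pqe|pqe] := eqVneq (cross (vsub p q) e) 0.
  have -> : line q e = line p d by apply: line_eq => //; apply/lineP.
  by left; exists p, d; split => //; apply: pset_ext => x; split=> [[]|].
right; right; apply: pset_ext => x; split=> // -[xpd xqe].
have : line q e = line p d.
  rewrite (line_eq e0 e0 (cross_self e) xqe) (line_eq d0 d0 (cross_self d) xpd).
  by apply: line_eq => //; apply: line_base.
by move=> qepd; move/eqP: pqe; apply; apply/(lineP _ _ e0); rewrite qepd; apply: line_base.
Qed.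

Lemma open_segment_line m d t1 t2 t : d != (0, 0) -> t1 < t2 ->
  open_segment (vadd m (vscale t1 d)) (vadd m (vscale t2 d)) (vadd m (vscale t d))
  <-> t1 < t < t2.
Proof.
move=> d0 t12; split=> [[tau [/andP[tau0 tau1] mtd]]|/andP[tt1 tt2]].
  have -> : t = (1 - tau) * t1 + tau * t2.
    apply: (line_param_inj (m := m) d0); rewrite mtd /vadd /vscale /=; congr pair; ring.
  have : 0 < tau * (t2 - t1) by rewrite mulr_gt0 // subr_gt0.
  have : 0 < (1 - tau) * (t2 - t1) by rewrite mulr_gt0 // subr_gt0.
  by move=> *; apply/andP; split; lra.
have t21 : t2 - t1 != 0 by rewrite subr_eq0 gt_eqF.
exists ((t - t1) / (t2 - t1)); split.
  by rewrite divr_gt0 ?subr_gt0 //= ltr_pdivrMr ?subr_gt0 // mul1r ltrD2r.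
by rewrite /vadd /vscale /=; congr pair; field.
Qed.

Lemma line_superlevel m d (g : pt R -> R) (A B C K : R) : d != (0, 0) -> 0 < A ->
  (forall t, g (vadd m (vscale t d)) = A * t ^+ 2 + B * t + C) ->
  is_line (fun q => line m d q /\ K <= g q) \/ is_cut_line (fun q => line m d q /\ K <= g q).
Proof.
move=> d0 A0 gq; have [all_ge|[t1 [t2 [t12 ge_iff]]]] := quadratic_ge_cases B C K A0.
  left; exists m, d; split => //; apply: pset_ext => q.
  by split=> [[]|[t ->]] //; split; [exists t | rewrite gq].
right; exists (line m d), (vadd m (vscale t1 d)), (vadd m (vscale t2 d)); split.
  by exists m, d.
split; first by move/(line_param_inj d0) => t12'; move: t12; rewrite t12' ltxx.
split; first by exists t1.
split; first by exists t2.
apply: pset_ext => q; split=> -[[t ->] h]; (split; first by exists t).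
  by rewrite (open_segment_line m t d0 t12) -ge_iff -gq.
by move: h; rewrite gq ge_iff (open_segment_line m t d0 t12).
Qed.

Lemma orth_lines_through L L' x : orth_lines L L' -> L x -> L' x ->
  exists d e, [/\ cross d e != 0, dot d e = 0, L = line x d & L' = line x e].
Proof.
move=> [q [d [q' [e [d0 [e0 [-> [-> de]]]]]]]] xL xL'.
exists d, e; split => //; first exact: cross_neq0_orth.
  by apply: line_eq; rewrite ?cross_self.
by apply: line_eq; rewrite ?cross_self.
Qed.

End Lines.

Section Midchords.
Context {R : realType}.
Implicit Types (p q o d e : pt R) (L : pset R).

Definition midchord L L' p (r : R) : Prop :=
  exists a c, L a /\ L' c /\ p = midpoint a c /\ norm2 (vsub a c) = r.

Lemma dist_eqP (a c b d : pt R) :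
  dist a c = dist b d <-> norm2 (vsub a c) = norm2 (vsub b d).
Proof.
split=> [|h]; last by rewrite /dist -/(norm2 (vsub a c)) h.
by move/eqP; rewrite eqr_sqrt ?addr_ge0 ?sqr_ge0 // => /eqP.
Qed.

Lemma rect_locusP L1 L3 L2 L4 p :
  rect_locus L1 L3 L2 L4 p <-> exists r, midchord L1 L3 p r /\ midchord L2 L4 p r.
Proof.
split=> [[a [c [b [d [h1 [h3 [h2 [h4 [pac [pbd /dist_eqP acbd]]]]]]]]]]|].
  by exists (norm2 (vsub a c)); split; [exists a, c | exists b, d].
move=> [r [[a [c [h1 [h3 [pac acr]]]]] [b [d [h2 [h4 [pbd bdr]]]]]]].
by exists a, c, b, d; do 6!split => //; apply/dist_eqP; rewrite acr bdr.
Qed.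

Lemma midchord_sym L L' p r : midchord L L' p r -> midchord L' L p r.
Proof.
move=> [a [c [h [h' [pac acr]]]]]; exists c, a; do 2!split => //; split.
  by rewrite pac /midpoint; congr pair; rewrite addrC.
by rewrite -acr /norm2 /vsub /=; ring.
Qed.

Lemma rect_locusC L1 L3 L2 L4 : rect_locus L1 L3 L2 L4 = rect_locus L2 L4 L1 L3.
Proof. by apply: pset_ext => p; rewrite !rect_locusP; split=> -[r [h h']]; exists r. Qed.

Lemma rect_locus_flip L1 L3 L2 L4 : rect_locus L1 L3 L2 L4 = rect_locus L1 L3 L4 L2.
Proof.
by apply: pset_ext => p; rewrite !rect_locusP; split=> -[r [h /midchord_sym h']]; exists r.
Qed.

Lemma midchord_crossingP o d e p r : cross d e != 0 ->
  midchord (line o d) (line o e) p r <-> r = chord_len2 o d e p.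
Proof.
move=> de; split=> [[a [c [[s ->] [[t ->] [-> <-]]]]]|->].
  move: de; rewrite /chord_len2 /skew_refl /coordl /coordr /norm2 /cross.
  by rewrite /vsub /vscale /midpoint /= => de; field.
set l := coordl d e (vsub p o); set m := coordr d e (vsub p o).
exists (vadd o (vscale (2 * l) d)), (vadd o (vscale (2 * m) e)).
split; first by exists (2 * l).
split; first by exists (2 * m).
split; last by rewrite /chord_len2 /skew_refl -/l -/m /norm2 /vsub /vadd /vscale /=; ring.
move: (coordsP (vsub p o) de); rewrite -/l -/m /midpoint /vadd /vscale /vsub /=.
by move=> -[h1 h2]; rewrite [p]surjective_pairing; congr pair; lra.
Qed.

Lemma midchord_parallelP p p' d q r : d != (0, 0) ->
  midchord (line p d) (line p' d) q r <->
  line (midpoint p p') d q /\ cross (vsub p p') d ^+ 2 <= r * norm2 d.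
Proof.
move=> d0; have := norm2_gt0 d0; rewrite lt0r => /andP[n0 _].
split=> [[a [c [[s ->] [[t ->] [-> <-]]]]]|[]].
  split; first by apply/lineP => //; rewrite /cross /vsub /midpoint /=; ring.
  rewrite lagrange_identity.
  have -> : cross (vsub (vadd p (vscale s d)) (vadd p' (vscale t d))) d = cross (vsub p p') d.
    by rewrite /cross /vsub /vadd /vscale /=; ring.
  by rewrite lerDl sqr_ge0.
move=> [tau ->] Cr.
set C := cross (vsub p p') d; set X := dot (vsub p p') d.
have Cr0 : 0 <= r * norm2 d - C ^+ 2 by rewrite subr_ge0.
set S := Num.sqrt (r * norm2 d - C ^+ 2).
have Sr : r = (S ^+ 2 + C ^+ 2) / norm2 d by rewrite sqr_sqrtr // subrK mulfK.
set u := (S - X) / norm2 d.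
exists (vadd p (vscale (tau + u / 2) d)), (vadd p' (vscale (tau - u / 2) d)).
split; first by exists (tau + u / 2).
split; first by exists (tau - u / 2).
split; first by rewrite /midpoint /vadd /vscale /=; congr pair; field.
move: n0; rewrite Sr /u /X /C /norm2 /vsub /vadd /vscale /cross /dot /= => n0.
by field.
Qed.

Lemma rect_locus_crossingP o1 d1 e1 o2 d2 e2 p :
  cross d1 e1 != 0 -> cross d2 e2 != 0 ->
  rect_locus (line o1 d1) (line o1 e1) (line o2 d2) (line o2 e2) p <->
  chord_len2 o1 d1 e1 p = chord_len2 o2 d2 e2 p.
Proof.
move=> de1 de2; rewrite rect_locusP.
split=> [[r [/(midchord_crossingP _ _ _ de1) <- /(midchord_crossingP _ _ _ de2) <-]] //|h].
by exists (chord_len2 o1 d1 e1 p); split; apply/midchord_crossingP; rewrite ?h.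
Qed.

End Midchords.

Section RectangleLocus.
Context {R : realType}.
Implicit Types (p q o d e : pt R) (L : pset R).

Lemma rect_locus_parallel_parallel p1 p3 d p2 p4 d' :
  d != (0, 0) -> d' != (0, 0) ->
  rect_locus (line p1 d) (line p3 d) (line p2 d') (line p4 d')
  = (fun q => line (midpoint p1 p3) d q /\ line (midpoint p2 p4) d' q).
Proof.
move=> d0 d'0; have n0 := norm2_gt0 d0; have n'0 := norm2_gt0 d'0.
apply: pset_ext => q; rewrite rect_locusP; split.
  move=> [r [/(midchord_parallelP _ _ _ _ d0) [? _]]].
  by move=> /(midchord_parallelP _ _ _ _ d'0) [? _].
move=> [h h']; set h1 := cross (vsub p1 p3) d ^+ 2; set h2 := cross (vsub p2 p4) d' ^+ 2.
have h1n : 0 <= h1 / norm2 d by rewrite divr_ge0 ?sqr_ge0 ?norm2_ge0.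
have h2n : 0 <= h2 / norm2 d' by rewrite divr_ge0 ?sqr_ge0 ?norm2_ge0.
exists (h1 / norm2 d + h2 / norm2 d'); split; apply/midchord_parallelP => //; split => //.
  by rewrite mulrDl divfK ?gt_eqF // lerDl mulr_ge0 ?norm2_ge0.
by rewrite mulrDl [X in _ <= _ + X]divfK ?gt_eqF // lerDr mulr_ge0 ?norm2_ge0.
Qed.

Lemma rect_locus_parallel_crossing p1 p3 d o d2 d4 :
  d != (0, 0) -> cross d2 d4 != 0 ->
  rect_locus (line p1 d) (line p3 d) (line o d2) (line o d4)
  = (fun q => line (midpoint p1 p3) d q /\
              cross (vsub p1 p3) d ^+ 2 / norm2 d <= chord_len2 o d2 d4 q).
Proof.
move=> d0 d24; have n0 := norm2_gt0 d0.
apply: pset_ext => q; rewrite rect_locusP; split.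
  move=> [r [/(midchord_parallelP _ _ _ _ d0) [h hr] /(midchord_crossingP _ _ _ d24) rE]].
  by rewrite -rE ler_pdivrMr.
move=> [h hr]; exists (chord_len2 o d2 d4 q); split; last exact/midchord_crossingP.
by apply/midchord_parallelP => //; rewrite -ler_pdivrMr.
Qed.

Definition line_cut_point_or_empty (S : pset R) : Prop :=
  is_line S \/ is_cut_line S \/ is_point S \/ S = @empty_pset R.

Lemma rect_locus_parallel_shape p1 d1 p3 d3 p2 d2 p4 d4 :
  d1 != (0, 0) -> d3 != (0, 0) -> d2 != (0, 0) -> d4 != (0, 0) -> cross d1 d3 = 0 ->
  line_cut_point_or_empty (rect_locus (line p1 d1) (line p3 d3) (line p2 d2) (line p4 d4)).
Proof.
move=> n1 n3 n2 n4 d13.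
rewrite (line_redir p3 n3 n1 (cross_eq0_sym d13)).
have [d24|d24] := eqVneq (cross d2 d4) 0.
  rewrite (line_redir p4 n4 n2 (cross_eq0_sym d24)).
  rewrite rect_locus_parallel_parallel //.
  have [|[|]] := lines_meet_shape (midpoint p1 p3) (midpoint p2 p4) n1 n2.
  - by left.
  - by right; right; left.
  - by right; right; right.
have [o [-> ->]] := crossing_lines_meet p2 p4 d24.
rewrite rect_locus_parallel_crossing //.
have sk0 : skew_refl d2 d4 d1 != (0, 0) by apply: contra_neq n1; apply: skew_refl_eq0.
have A0 : 0 < 4 * norm2 (skew_refl d2 d4 d1) by rewrite mulr_gt0 ?norm2_gt0.
have [|] := line_superlevel (cross (vsub p1 p3) d1 ^+ 2 / norm2 d1) n1 A0
  (chord_len2_along o d2 d4 (midpoint p1 p3) d1).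
- by left.
- by right; left.
Qed.

Lemma rect_locus_full_crossing p1 d1 p3 d3 L2 L4 : d1 != (0, 0) -> d3 != (0, 0) ->
  rect_locus (line p1 d1) (line p3 d3) L2 L4 = @full_pset R -> cross d1 d3 != 0.
Proof.
move=> n1 n3 full; apply/eqP => d13.
rewrite (line_redir p3 n3 n1 (cross_eq0_sym d13)) in full.
set m := midpoint p1 p3; set p := vadd m (d1.2, - d1.1).
have : rect_locus (line p1 d1) (line p3 d1) L2 L4 p by rewrite full.
case/rect_locusP => r [/(midchord_parallelP _ _ _ _ n1) [/(lineP _ _ n1) pm _] _].
have : cross (vsub p m) d1 = norm2 d1 by rewrite /cross /vsub /p /vadd /norm2 /=; ring.
by rewrite pm => /esym/eqP; rewrite gt_eqF ?norm2_gt0.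
Qed.

Lemma orth_of_same_mixed_term o d1 e1 d2 e2 : cross d1 e1 != 0 -> cross d2 e2 != 0 ->
  (forall w, mixed_term d1 e1 w = mixed_term d2 e2 w) ->
  ~ ((line o d1 = line o d2 /\ line o e1 = line o e2) \/
     (line o d1 = line o e2 /\ line o e1 = line o d2)) ->
  dot d1 e1 = 0.
Proof.
move=> de1 de2 same distinct.
have n1 := cross_neq0_l de1; have m1 := cross_neq0_r de1.
have n2 := cross_neq0_l de2; have m2 := cross_neq0_r de2.
case: (mixed_term_uniq de1 de2 same) => [->//|[c12 c34]|[c14 c32]]; case: distinct.
  by left; split; apply: line_redir.
by right; split; apply: line_redir.
Qed.

Lemma rect_locus_full_orth p1 d1 p3 d3 p2 d2 p4 d4 :
  d1 != (0, 0) -> d3 != (0, 0) -> d2 != (0, 0) -> d4 != (0, 0) ->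
  ~ ((line p1 d1 = line p2 d2 /\ line p3 d3 = line p4 d4) \/
     (line p1 d1 = line p4 d4 /\ line p3 d3 = line p2 d2)) ->
  rect_locus (line p1 d1) (line p3 d3) (line p2 d2) (line p4 d4) = @full_pset R ->
  orth_lines (line p1 d1) (line p3 d3) /\ orth_lines (line p2 d2) (line p4 d4) /\
  exists x, line p1 d1 x /\ line p3 d3 x /\ line p2 d2 x /\ line p4 d4 x.
Proof.
move=> n1 n3 n2 n4 distinct full.
have d13 := rect_locus_full_crossing n1 n3 full.
have d24 : cross d2 d4 != 0.
  apply: (rect_locus_full_crossing (p1 := p2) (p3 := p4)
           (L2 := line p1 d1) (L4 := line p3 d3) n2 n4).
  by rewrite rect_locusC.
have [o [E1 E3]] := crossing_lines_meet p1 p3 d13.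
have [o' [E2 E4]] := crossing_lines_meet p2 p4 d24.
rewrite E1 E3 E2 E4 in distinct full *.
have same p : chord_len2 o d1 d3 p = chord_len2 o' d2 d4 p.
  by apply/rect_locus_crossingP => //; rewrite full.
have oo' : o = o' by apply: (chord_len2_eq0 d24); rewrite -same chord_len2_base.
subst o'.
have mixed w : mixed_term d1 d3 w = mixed_term d2 d4 w.
  have := same (vadd o w); rewrite !chord_len2E //.
  have -> : vsub (vadd o w) o = w by case: w => a b; rewrite /vsub /vadd /=; congr pair; ring.
  by move=> h; lra.
split; last split; last by exists o; do !split; apply: line_base.
  exists o, d1, o, d3; do 4!split => //.
  exact: (orth_of_same_mixed_term d13 d24 mixed distinct).
exists o, d2, o, d4; do 4!split => //.
apply: (orth_of_same_mixed_term (o := o) d24 d13 (fun w => esym (mixed w))).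
by case=> -[h1 h2]; apply: distinct; [left | right]; split; apply/esym.
Qed.

Lemma rect_locus_full_of_orth L1 L3 L2 L4 x :
  orth_lines L1 L3 -> orth_lines L2 L4 -> L1 x -> L3 x -> L2 x -> L4 x ->
  rect_locus L1 L3 L2 L4 = @full_pset R.
Proof.
move=> O13 O24 x1 x3 x2 x4.
have [d [e [de de0 -> ->]]] := orth_lines_through O13 x1 x3.
have [d' [e' [de' de'0 -> ->]]] := orth_lines_through O24 x2 x4.
apply: pset_ext => p; split => // _.
by apply/rect_locus_crossingP => //; rewrite !chord_len2_orth.
Qed.

Lemma rect_locus_orth_is_line o1 d1 e1 o2 d2 e2 :
  cross d1 e1 != 0 -> cross d2 e2 != 0 -> dot d1 e1 = 0 -> dot d2 e2 = 0 -> o1 <> o2 ->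
  is_line (rect_locus (line o1 d1) (line o1 e1) (line o2 d2) (line o2 e2)).
Proof.
move=> de1 de2 de10 de20 o12.
have -> : rect_locus (line o1 d1) (line o1 e1) (line o2 d2) (line o2 e2) =
    (fun p => 2 * (o2.1 - o1.1) * p.1 + 2 * (o2.2 - o1.2) * p.2 = norm2 o2 - norm2 o1).
  apply: pset_ext => p; rewrite rect_locus_crossingP // !chord_len2_orth //.
  by rewrite /norm2 /vsub /=; split=> h; lra.
apply: is_line_affine_eq; apply/eqP => -[h1 h2]; apply: o12.
by case: o1 o2 h1 h2 => [a1 a2] [b1 b2] /= h1 h2; congr pair; lra.
Qed.

Lemma rect_locus_translate_is_line o d e v : cross d e != 0 -> v != (0, 0) ->
  is_line (rect_locus (line o d) (line o e) (line (vadd o v) d) (line (vadd o v) e)).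
Proof.
move=> de v0; set c := skew_refl d e v.
set k1 := dot (skew_refl d e (1, 0)) c; set k2 := dot (skew_refl d e (0, 1)) c.
have -> : rect_locus (line o d) (line o e) (line (vadd o v) d) (line (vadd o v) e) =
    (fun p => 8 * k1 * p.1 + 8 * k2 * p.2 = 4 * norm2 c + 8 * (k1 * o.1 + k2 * o.2)).
  apply: pset_ext => p; rewrite rect_locus_crossingP // chord_len2_shift.
  rewrite dot_skew_reflE -/c -/k1 -/k2.
  by rewrite /vsub /=; split=> h; lra.
apply: is_line_affine_eq; apply/eqP => -[h1 h2].
have c0 : c != (0, 0) by apply: contra_neq v0; apply: skew_refl_eq0.
have : norm2 c = v.1 * k1 + v.2 * k2 by rewrite norm2_dot {1}/c dot_skew_reflE.
have [-> ->] : k1 = 0 /\ k2 = 0 by split; lra.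
by rewrite !mulr0 addr0 => /eqP; rewrite norm2_eq0 (negPf c0).
Qed.

Lemma rect_locus_crossing_is_line p1 d1 p3 d3 p2 d2 p4 d4 :
  cross d1 d3 != 0 -> cross d2 d4 != 0 ->
  (forall x y, line p1 d1 x -> line p3 d3 x -> line p2 d2 y -> line p4 d4 y -> x <> y) ->
  (orth_lines (line p1 d1) (line p3 d3) /\ orth_lines (line p2 d2) (line p4 d4))
  \/ pair_translation (line p1 d1) (line p3 d3) (line p2 d2) (line p4 d4) ->
  is_line (rect_locus (line p1 d1) (line p3 d3) (line p2 d2) (line p4 d4)).
Proof.
move=> d13 d24 apart.
have [o [E1 E3]] := crossing_lines_meet p1 p3 d13.
have [o' [E2 E4]] := crossing_lines_meet p2 p4 d24.
rewrite E1 E3 E2 E4 in apart *.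
have oo' : o <> o' by apply: apart; apply: line_base.
have no_common : ~ (line o' d2 o /\ line o' d4 o).
  by move=> [h2 h4]; apply: (apart o o) => //; apply: line_base.
have vadd0 : vadd o (0, 0) = o by case: (o) => a b; rewrite /vadd /= !addr0.
case=> [[O13 O24]|[v [[F2 F4]|[F2 F4]]]].
- have [e1 [f1 [ef1 ef10 -> ->]]] := orth_lines_through O13 (line_base o d1) (line_base o d3).
  have [e2 [f2 [ef2 ef20 -> ->]]] := orth_lines_through O24 (line_base o' d2) (line_base o' d4).
  exact: rect_locus_orth_is_line.
- rewrite !translate_line in F2 F4; rewrite F2 F4.
  apply: rect_locus_translate_is_line => //.
  by apply/eqP => v0; apply: no_common; rewrite F2 F4 v0 vadd0; split; apply: line_base.
- rewrite !translate_line in F2 F4; rewrite rect_locus_flip F2 F4.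
  apply: rect_locus_translate_is_line => //.
  by apply/eqP => v0; apply: no_common; rewrite F2 F4 v0 vadd0; split; apply: line_base.
Qed.

End RectangleLocus.

Unset Implicit Arguments.

Theorem proposition4p4 (R : realType) (L1 L3 L2 L4 : pset R) :
  is_line L1 -> is_line L3 -> is_line L2 -> is_line L4 ->
  L1 <> L3 -> L2 <> L4 ->
  ~ ((L1 = L2 /\ L3 = L4) \/ (L1 = L4 /\ L3 = L2)) ->
  (* (1) *)
  ((par_lines L1 L3 \/ par_lines L2 L4) ->
     is_line (rect_locus L1 L3 L2 L4)
     \/ (exists (L : pset R) (u v : pt R), is_line L /\ u <> v /\ L u /\ L v /\
           rect_locus L1 L3 L2 L4 = (fun q => L q /\ ~ open_segment u v q))
     \/ (exists x : pt R, rect_locus L1 L3 L2 L4 = (fun q => q = x))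
     \/ rect_locus L1 L3 L2 L4 = @empty_pset R)
  /\
  (* (2) *)
  (rect_locus L1 L3 L2 L4 = @full_pset R <->
     orth_lines L1 L3 /\ orth_lines L2 L4 /\
     exists x : pt R, L1 x /\ L3 x /\ L2 x /\ L4 x)
  /\
  (* (3) *)
  (~ par_lines L1 L3 -> ~ par_lines L2 L4 ->
   (forall x y : pt R, L1 x -> L3 x -> L2 y -> L4 y -> x <> y) ->
   ((orth_lines L1 L3 /\ orth_lines L2 L4) \/ pair_translation L1 L3 L2 L4) ->
   is_line (rect_locus L1 L3 L2 L4)).
Proof.
move=> [p1 [d1 [n1 ->]]] [p3 [d3 [n3 ->]]] [p2 [d2 [n2 ->]]] [p4 [d4 [n4 ->]]] _ _ distinct.
split.
  case=> [/(par_linesP p1 p3 n1 n3) d13 | /(par_linesP p2 p4 n2 n4) d24].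
    exact: rect_locus_parallel_shape.
  by rewrite rect_locusC; apply: rect_locus_parallel_shape.
split.
  split; first exact: rect_locus_full_orth.
  by move=> [O13 [O24 [x [x1 [x3 [x2 x4]]]]]]; exact: rect_locus_full_of_orth x1 x3 x2 x4.
move=> np13 np24; apply: rect_locus_crossing_is_line.
- by apply/eqP => /(par_linesP p1 p3 n1 n3)/np13.
- by apply/eqP => /(par_linesP p2 p4 n2 n4)/np24.
Qed.
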